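(* Let $\mathbf{A}$ and $\mathbf{B}$ be algebras in the same language and let $e$ be a unary term which is idempotent, separating and dense for both $\mathbf{A}$ and $\mathbf{B}$. Then $\mathbf{A}\cong\mathbf{B}$ if and only if $e(\mathbf{A})\cong e(\mathbf{B})$.
   Context: A unary term $e$ is idempotent for $\mathbf{A}$ if $\mathbf{A}\models e(e(x))=e(x)$. The localization $e(\mathbf{A})$ is the algebra with universe $e(A)$ whose fundamental operation symbols are the symbols $et$, one for each term $t$ in the language of $\mathbf{A}$, where $et$ is interpreted as the restriction to $e(A)$ of the term operation $e(t(x_1,\dots,x_n))$ of $\mathbf{A}$ (so $e(\mathbf{A})$ and $e(\mathbf{B})$ have the same similarity type). The term $e$ separates $\mathbf{A}$ if for all $a\neq b$ in $A$ there is a unary term $g$ with $e(g(a))\neq e(g(b))$. The term $e$ is dense for $\mathbf{A}$ if $\mathbf{A}$ is generated by $e(A)$. *)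

From mathcomp Require Import all_boot.
Set Implicit Arguments. Unset Strict Implicit. Unset Printing Implicit Defensive.

Record signature := Signature { op : Type ; arity : op -> nat }.

Inductive term (L : signature) (V : Type) : Type :=
| Var : V -> term L V
| App : forall f : op L, ('I_(arity f) -> term L V) -> term L V.
Arguments Var {L V} _.
Arguments App {L V} f _.

Record algebra (L : signature) := Algebra {
  carrier :> Type ;
  interp : forall f : op L, ('I_(arity f) -> carrier) -> carrier }.

Fixpoint eval (L : signature) (A : algebra L) (V : Type) (env : V -> A)
  (t : term L V) : A :=
  match t with
  | Var v => env v
  | App f ts => @interp L A f (fun i => @eval L A V env (ts i))
  end.

Definition uterm (L : signature) := term L 'I_1.
Definition ueval (L : signature) (A : algebra L) (e : uterm L) (a : A) : A :=
  eval (fun _ => a) e.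

Definition idempotent_for L (A : algebra L) (e : uterm L) : Prop :=
  forall x : A, ueval e (ueval e x) = ueval e x.

Definition separates L (A : algebra L) (e : uterm L) : Prop :=
  forall a b : A, a <> b -> exists g : uterm L, ueval e (ueval g a) <> ueval e (ueval g b).

Definition subuniverse L (A : algebra L) (S : A -> Prop) : Prop :=
  forall (f : op L) (a : 'I_(arity f) -> A), (forall i, S (a i)) -> S (@interp L A f a).

Definition generated_by L (A : algebra L) (X : A -> Prop) : Prop :=
  forall S : A -> Prop, subuniverse S -> (forall x, X x -> S x) -> forall x, S x.

Definition dense_for L (A : algebra L) (e : uterm L) : Prop :=
  generated_by (fun x : A => exists a : A, x = ueval e a).

(* The language of localizations: one symbol [e t] for every term t;
   a term t(x_0,...,x_{n-1}) in n variables gives an n-ary symbol. *)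
Definition loc_signature (L : signature) : signature :=
  @Signature {n : nat & term L 'I_n} (fun s => projT1 s).

Definition loc_carrier L (A : algebra L) (e : uterm L) : Type :=
  {x : A | exists a : A, x = ueval e a}.

Definition loc_op L (A : algebra L) (e : uterm L) (s : op (loc_signature L))
  (xs : 'I_(arity s) -> loc_carrier A e) : loc_carrier A e :=
  exist _ (ueval e (eval (fun i => proj1_sig (xs i)) (projT2 s)))
          (ex_intro _ _ erefl).

Definition localization L (A : algebra L) (e : uterm L) : algebra (loc_signature L) :=
  @Algebra (loc_signature L) (loc_carrier A e) (@loc_op L A e).

Definition is_hom L (A B : algebra L) (h : A -> B) : Prop :=
  forall (f : op L) (a : 'I_(arity f) -> A),
    h (@interp L A f a) = @interp L B f (fun i => h (a i)).

Definition isomorphic L (A B : algebra L) : Prop :=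
  exists h : A -> B, is_hom h /\ bijective h.

From Stdlib Require Import FunctionalExtensionality ProofIrrelevance IndefiniteDescription Classical.
From mathcomp Require Import all_boot.
Set Implicit Arguments. Unset Strict Implicit. Unset Printing Implicit Defensive.

(* An isomorphism h : A -> B restricts to e(A) -> e(B) because h commutes with the
   term operation e.  Conversely, let Phi : e(A) -> e(B) be an isomorphism.  Since e(A)
   generates A, every a in A has the form t(x_1,...,x_n) with x_i in e(A); put
   h(a) := t(Phi x_1,...,Phi x_n).  This is well defined: if two such values differed,
   separation in B would give a unary g with e(g(.)) distinguishing them, but
   e(g(t(...))) is a basic operation of the localization, preserved by Phi, and the two
   representations of a agree before applying Phi.  The map h is a homomorphism
   extending Phi, the same construction applied to Phi^-1 gives its inverse, and the
   two composites are the identity because they fix the generating set e(A) (resp. e(B)). *)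

Fixpoint tsubst L V W (s : V -> term L W) (t : term L V) : term L W :=
  match t with Var v => s v | App f ts => App f (fun i => tsubst s (ts i)) end.

Lemma eval_tsubst L (A : algebra L) V W (s : V -> term L W) (env : W -> A) t :
  eval env (tsubst s t) = eval (fun v => eval env (s v)) t.
Proof.
elim: t => [v|f ts IH] //=.
by congr (interp _); apply: functional_extensionality => i; exact: IH.
Qed.

Section Homomorphisms.
Variables (L : signature) (A B C : algebra L).

Lemma eval_hom (h : A -> B) V (env : V -> A) t :
  is_hom h -> h (eval env t) = eval (fun v => h (env v)) t.
Proof.
move=> hom_h; elim: t => [v|f ts IH] //=.
by rewrite hom_h; congr (interp _); apply: functional_extensionality => i; exact: IH.
Qed.

Lemma ueval_hom (h : A -> B) (e : uterm L) a :
  is_hom h -> h (ueval e a) = ueval e (h a).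
Proof. exact: eval_hom. Qed.

Lemma is_hom_comp (h : A -> B) (g : B -> C) : is_hom h -> is_hom g -> is_hom (g \o h).
Proof. by move=> hom_h hom_g f a /=; rewrite hom_h hom_g. Qed.

Lemma can_is_hom (h : A -> B) (g : B -> A) :
  is_hom h -> cancel h g -> cancel g h -> is_hom g.
Proof.
move=> hom_h hK gK f b.
have -> : b = (fun i => h (g (b i))) by apply: functional_extensionality => i; rewrite gK.
by rewrite -hom_h hK; congr (interp _); apply: functional_extensionality => i; rewrite gK.
Qed.

Lemma hom_eq_generated (X : A -> Prop) (h g : A -> B) :
  generated_by X -> is_hom h -> is_hom g -> (forall x, X x -> h x = g x) -> h =1 g.
Proof.
move=> genX hom_h hom_g eqX; apply: genX => // f a eqa.
by rewrite hom_h hom_g; congr (interp _); apply: functional_extensionality.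
Qed.

End Homomorphisms.

Section TermGenerated.
Variables (L : signature) (A : algebra L) (X : Type) (v : X -> A).

Definition term_generated (x : A) : Prop :=
  exists n (t : term L 'I_n) (env : 'I_n -> X), x = eval (fun i => v (env i)) t.

Lemma term_generated_family k (xs : 'I_k -> A) :
  (forall i, term_generated (xs i)) ->
  exists n (env : 'I_n -> X) (ts : 'I_k -> term L 'I_n),
    forall i, xs i = eval (fun u => v (env u)) (ts i).
Proof.
elim: k xs => [|k IH] xs gen_xs.
  have empty (T : Type) : 'I_0 -> T by case.
  by exists 0, (empty _), (empty _); case.
have [n [env [ts Ets]]] := IH (fun j => xs (lift ord0 j)) (fun j => gen_xs _).
have [m [t0 [env0 Et0]]] := gen_xs ord0.
exists (m + n), (fun i => match split i with inl a => env0 a | inr b => env b end),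
  (fun i => match unlift ord0 i with
            | Some j => tsubst (fun u => Var (rshift m u)) (ts j)
            | None => tsubst (fun u => Var (lshift n u)) t0 end).
move=> i; case: (unliftP ord0 i) => [j ->|->]; rewrite eval_tsubst /=.
- rewrite Ets; congr (eval _ _); apply: functional_extensionality => u.
  by rewrite (unsplitK (inr u)).
- rewrite Et0; congr (eval _ _); apply: functional_extensionality => u.
  by rewrite (unsplitK (inl u)).
Qed.

Lemma term_generated_subuniverse : subuniverse term_generated.
Proof.
move=> f xs /term_generated_family [n [env [ts Ets]]].
exists n, (App f ts), env => /=.
by congr (interp _); apply: functional_extensionality.
Qed.

End TermGenerated.

Section Localization.
Variables (L : signature) (e : uterm L).

Lemma loc_val_inj (A : algebra L) : injective (@sval A _ : loc_carrier A e -> A).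
Proof. by case=> x px [y py] /= exy; subst y; rewrite (proof_irrelevance _ px py). Qed.

Definition loc_in (A : algebra L) (a : A) : loc_carrier A e :=
  exist _ (ueval e a) (ex_intro _ a erefl).

Lemma dense_term_generated (A : algebra L) :
  dense_for A e -> forall x : A, term_generated (@sval A _ : loc_carrier A e -> A) x.
Proof.
move=> denseA; apply: denseA; first exact: term_generated_subuniverse.
by move=> _ [a ->]; exists 1, (Var ord0), (fun _ => loc_in a).
Qed.

(* The basic operation e(g(t(x_1,...,x_n))) of the localization. *)
Definition loc_symbol n (g : uterm L) (t : term L 'I_n) : op (loc_signature L) :=
  existT _ n (tsubst (fun _ => t) g).

Lemma loc_op_symbol (A : algebra L) n g t (env : 'I_n -> loc_carrier A e) :
  sval (@loc_op L A e (loc_symbol g t) env)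
  = ueval e (ueval g (eval (fun i => sval (env i)) t)).
Proof. by rewrite /= !eval_tsubst. Qed.

Section LocalizationMap.
Variables (A B : algebra L) (h : A -> B).
Hypothesis hom_h : is_hom h.

Lemma loc_map_subproof (x : loc_carrier A e) : exists b, h (sval x) = ueval e b.
Proof. by case: x => x [a Ea] /=; exists (h a); rewrite Ea; exact: ueval_hom. Qed.

Definition loc_map (x : loc_carrier A e) : loc_carrier B e :=
  exist _ (h (sval x)) (loc_map_subproof x).

Lemma loc_map_hom : @is_hom _ (localization A e) (localization B e) loc_map.
Proof.
by move=> s xs; apply: loc_val_inj => /=; rewrite ueval_hom // eval_hom.
Qed.

End LocalizationMap.

Lemma loc_map_can (A B : algebra L) (h : A -> B) (g : B -> A)
    (hom_h : is_hom h) (hom_g : is_hom g) :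
  cancel h g -> cancel (loc_map hom_h) (loc_map hom_g).
Proof. by move=> hK x; apply: loc_val_inj => /=. Qed.

Section Extension.
Variables (A B : algebra L) (Phi : loc_carrier A e -> loc_carrier B e).
Hypotheses (hom_Phi : @is_hom _ (localization A e) (localization B e) Phi)
           (sepB : separates B e) (denseA : dense_for A e).

Lemma eval_loc_hom_congr n m (t : term L 'I_n) (s : term L 'I_m) env env' :
  eval (fun i => sval (env i)) t = eval (fun i => sval (env' i)) s ->
  eval (fun i => sval (Phi (env i))) t = eval (fun i => sval (Phi (env' i))) s.
Proof.
move=> Eenv; apply: NNPP => /sepB [g]; apply.
have Phi_symbol k (u : term L 'I_k) env0 :
    sval (@loc_op L B e (loc_symbol g u) (fun i => Phi (env0 i)))
    = sval (Phi (@loc_op L A e (loc_symbol g u) env0)).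
  exact: (esym (congr1 sval (hom_Phi env0))).
rewrite -!(loc_op_symbol g _ (fun i => Phi _)) !Phi_symbol.
by congr (sval (Phi _)); apply: loc_val_inj; rewrite !loc_op_symbol Eenv.
Qed.

Definition loc_ext_rel (x : A) (y : B) : Prop :=
  exists n (t : term L 'I_n) (env : 'I_n -> loc_carrier A e),
    x = eval (fun i => sval (env i)) t /\ y = eval (fun i => sval (Phi (env i))) t.

Lemma loc_ext_rel_total x : exists y, loc_ext_rel x y.
Proof.
have [n [t [env ->]]] := dense_term_generated denseA x.
by exists (eval (fun i => sval (Phi (env i))) t), n, t, env.
Qed.

Definition loc_ext (x : A) : B :=
  proj1_sig (constructive_indefinite_description _ (loc_ext_rel_total x)).

Lemma loc_ext_eval n (t : term L 'I_n) env :
  loc_ext (eval (fun i => sval (env i)) t) = eval (fun i => sval (Phi (env i))) t.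
Proof.
rewrite /loc_ext; case: constructive_indefinite_description => y [m [s [env' [E Ey]]]].
by rewrite /= Ey; apply: eval_loc_hom_congr; rewrite -E.
Qed.

Lemma loc_ext_sval x : loc_ext (sval x) = sval (Phi x).
Proof. exact: (loc_ext_eval (Var (ord0 : 'I_1)) (fun _ => x)). Qed.

Lemma loc_ext_hom : is_hom loc_ext.
Proof.
move=> f xs.
have /term_generated_family [n [env [ts Ets]]] := fun i => dense_term_generated denseA (xs i).
have -> : xs = fun i => eval (fun u => sval (env u)) (ts i).
  exact: functional_extensionality.
rewrite (loc_ext_eval (App f ts)) /=.
by congr (interp _); apply: functional_extensionality => i; rewrite loc_ext_eval.
Qed.

End Extension.

Lemma loc_ext_can (A B : algebra L) (Phi : loc_carrier A e -> loc_carrier B e)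
    (Psi : loc_carrier B e -> loc_carrier A e)
    (hom_Phi : @is_hom _ (localization A e) (localization B e) Phi)
    (hom_Psi : @is_hom _ (localization B e) (localization A e) Psi)
    (sepA : separates A e) (sepB : separates B e)
    (denseA : dense_for A e) (denseB : dense_for B e) :
  cancel Phi Psi -> cancel (loc_ext Phi denseA) (loc_ext Psi denseB).
Proof.
move=> PhiK; apply: (hom_eq_generated (g := id) denseA) => //.
  by apply: is_hom_comp; exact: loc_ext_hom.
move=> _ [a ->] /=.
rewrite (loc_ext_sval hom_Phi sepB denseA (loc_in a)) (loc_ext_sval hom_Psi sepA denseB).
exact: (congr1 (@sval _ _) (PhiK (loc_in a))).
Qed.

End Localization.

Theorem corollary2p4 (L : signature) (A B : algebra L) (e : uterm L) :
  idempotent_for A e -> separates A e -> dense_for A e ->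
  idempotent_for B e -> separates B e -> dense_for B e ->
  (isomorphic A B <-> isomorphic (localization A e) (localization B e)).
Proof.
move=> _ sepA denseA _ sepB denseB; split.
  case=> h [hom_h [g hK gK]].
  have hom_g := can_is_hom hom_h hK gK.
  exists (loc_map hom_h); split; first exact: loc_map_hom.
  by exists (loc_map hom_g); apply: loc_map_can.
case=> Phi [hom_Phi [Psi PhiK PsiK]].
have hom_Psi := can_is_hom hom_Phi PhiK PsiK.
exists (loc_ext Phi denseA); split; first exact: loc_ext_hom.
exists (loc_ext Psi denseB); exact: loc_ext_can.
Qed.
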